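(* Fix $h\ge 0$ and consider, for $y\ge (1-\lambda)e^{(\lambda-1)\beta h}$, the piecewise linear ODE in $y$ (with $h$ a parameter) $$\frac{\kappa^2}{2}y^2v_{yy}-rv=\begin{cases}\frac1\beta e^{\lambda\beta h}, & y\ge e^{\lambda\beta h},\\ \frac1\beta y-y\big(\frac1\beta\ln y-\lambda h\big), & e^{(\lambda-1)\beta h}<y<e^{\lambda\beta h},\\ \frac1\beta e^{(\lambda-1)\beta h}+hy, & (1-\lambda)e^{(\lambda-1)\beta h}\le y\le e^{(\lambda-1)\beta h}.\end{cases}$$ Its general solution is $$v(y,h)=\begin{cases}C_1(h)y^{r_1}+C_2(h)y^{r_2}-\frac{1}{r\beta}e^{\lambda\beta h}, & y\ge e^{\lambda\beta h},\\ C_3(h)y^{r_1}+C_4(h)y^{r_2}-\frac{y}{r\beta}+\frac{y}{r\beta}\big(\ln y-\lambda\beta h+\frac{\kappa^2}{2r}\big), & e^{(\lambda-1)\beta h}<y<e^{\lambda\beta h},\\ C_5(h)y^{r_1}+C_6(h)y^{r_2}-\frac1r hy-\frac{1}{r\beta}e^{(\lambda-1)\beta h}, & (1-\lambda)e^{(\lambda-1)\beta h}\le y\le e^{(\lambda-1)\beta h},\end{cases}$$ with arbitrary coefficients $C_1(h),\dots,C_6(h)$. There is a unique choice of differentiable coefficient functions $h\mapsto C_i(h)$, $h\ge 0$, such that: (a) $v(y,h)-yv_y(y,h)\to-\frac{1}{r\beta}e^{\lambda\beta h}$ as $y\to\infty$; (b) $y\mapsto v(y,h)$ is $C^1$ at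 $y=e^{\lambda\beta h}$ and at $y=e^{(\lambda-1)\beta h}$ (smooth fit); (c) the free boundary condition $v_h(y,h)=0$ holds at $y=(1-\lambda)e^{(\lambda-1)\beta h}$ for every $h\ge0$, where $v_h$ is computed from the third-region formula with $y$ held fixed; (d) $C_6(h)\to0$ as $h\to\infty$. This choice is $C_1\equiv 0$ and $C_2,\dots,C_6$ equal to the functions defined in the context.
   Context: Constants: $r>0$ (interest rate, equal to the discount rate), $\mu>r$, $\sigma>0$, $\beta>0$, $\lambda\in(0,1)$, $\kappa:=(\mu-r)/\sigma>0$. Let $r_{1,2}=\frac12\big(1\pm\sqrt{1+8r/\kappa^2}\big)$ be the roots of $z^2-z-2r/\kappa^2=0$, so $r_1>1$, $r_2<0$. Define, for $h\ge0$, $C_6(h):=\frac{(1-\lambda)^{r_1-r_2}}{(r_1-r_2)\beta r}\Big[\frac{1}{1-r_2}e^{(\lambda-1)(1-r_2)\beta h}-\frac{\lambda}{\lambda(1-r_2)-(r_1-r_2)}e^{[\lambda(1-r_2)-(r_1-r_2)]\beta h}\Big]$, $C_4(h):=C_6(h)+\frac{(1-r_1)\kappa^2}{2(r_1-r_2)\beta r^2}e^{(\lambda-1)(1-r_2)\beta h}$, $C_2(h):=C_6(h)+\frac{(1-r_1)\kappa^2}{2(r_1-r_2)\beta r^2}\big[e^{(\lambda-1)(1-r_2)\beta h}-e^{\lambda(1-r_2)\beta h}\big]$, $C_3(h):=\frac{(r_2-1)\kappa^2}{2(r_1-r_2)\beta r^2}e^{\lambda(1-r_1)\beta h}$, $C_5(h):=\frac{(1-r_2)\kappa^2}{2(r_1-r_2)\beta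 r^2}\big[e^{(\lambda-1)(1-r_1)\beta h}-e^{\lambda(1-r_1)\beta h}\big]$. *)

From Stdlib Require Import Reals.
From Coquelicot Require Import Coquelicot.
Open Scope R_scope.

Section Params.
Variables (r mu sigma beta lam : R).

Definition kappa : R := (mu - r) / sigma.
Definition r1 : R := (1 + sqrt (1 + 8 * r / kappa ^ 2)) / 2.
Definition r2 : R := (1 - sqrt (1 + 8 * r / kappa ^ 2)) / 2.

Definition C6def (h : R) : R :=
  Rpower (1 - lam) (r1 - r2) / ((r1 - r2) * beta * r) *
  (1 / (1 - r2) * exp ((lam - 1) * (1 - r2) * beta * h)
   - lam / (lam * (1 - r2) - (r1 - r2)) *
     exp ((lam * (1 - r2) - (r1 - r2)) * beta * h)).
Definition C4def (h : R) : R :=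
  C6def h + (1 - r1) * kappa ^ 2 / (2 * (r1 - r2) * beta * r ^ 2)
            * exp ((lam - 1) * (1 - r2) * beta * h).
Definition C2def (h : R) : R :=
  C6def h + (1 - r1) * kappa ^ 2 / (2 * (r1 - r2) * beta * r ^ 2)
            * (exp ((lam - 1) * (1 - r2) * beta * h)
               - exp (lam * (1 - r2) * beta * h)).
Definition C3def (h : R) : R :=
  (r2 - 1) * kappa ^ 2 / (2 * (r1 - r2) * beta * r ^ 2)
  * exp (lam * (1 - r1) * beta * h).
Definition C5def (h : R) : R :=
  (1 - r2) * kappa ^ 2 / (2 * (r1 - r2) * beta * r ^ 2)
  * (exp ((lam - 1) * (1 - r1) * beta * h) - exp (lam * (1 - r1) * beta * h)).

(* The three branches of the general solution (y^p := Rpower y p, y > 0). *)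
Definition v1 (C1 C2 : R -> R) (y h : R) : R :=
  C1 h * Rpower y r1 + C2 h * Rpower y r2 - / (r * beta) * exp (lam * beta * h).
Definition v2 (C3 C4 : R -> R) (y h : R) : R :=
  C3 h * Rpower y r1 + C4 h * Rpower y r2 - y / (r * beta)
  + y / (r * beta) * (ln y - lam * beta * h + kappa ^ 2 / (2 * r)).
Definition v3 (C5 C6 : R -> R) (y h : R) : R :=
  C5 h * Rpower y r1 + C6 h * Rpower y r2 - / r * h * y
  - / (r * beta) * exp ((lam - 1) * beta * h).

Definition v (C1 C2 C3 C4 C5 C6 : R -> R) (y h : R) : R :=
  if Rle_dec y (exp ((lam - 1) * beta * h)) then v3 C5 C6 y h
  else if Rlt_dec y (exp (lam * beta * h)) then v2 C3 C4 y h
  else v1 C1 C2 y h.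

Definition ybdry (h : R) : R := (1 - lam) * exp ((lam - 1) * beta * h).

End Params.

(* Derivative of f at h relative to the domain [0, +oo)
   (one-sided at h = 0, two-sided for h > 0). *)
Definition deriv_nonneg (f : R -> R) (h d : R) : Prop :=
  filterlim (fun k => (f k - f h) / (k - h))
    (within (fun k => 0 <= k /\ k <> h) (locally h)) (locally d).

Definition differentiable_nonneg (f : R -> R) : Prop :=
  forall h, 0 <= h -> exists d, deriv_nonneg f h d.

Definition C1_at (f : R -> R) (y0 : R) : Prop :=
  ex_derive f y0 /\ continuous (fun z => Derive f z) y0.

Definition admissible (r mu sigma beta lam : R) (C1 C2 C3 C4 C5 C6 : R -> R) : Prop :=
  let V := v r mu sigma beta lam C1 C2 C3 C4 C5 C6 in
  (differentiable_nonneg C1 /\ differentiable_nonneg C2 /\ differentiable_nonneg C3 /\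
   differentiable_nonneg C4 /\ differentiable_nonneg C5 /\ differentiable_nonneg C6) /\
  (forall h, 0 <= h ->
     is_lim (fun y => V y h - y * Derive (fun z => V z h) y) p_infty
            (- (/ (r * beta)) * exp (lam * beta * h))) /\
  (forall h, 0 <= h ->
     C1_at (fun y => V y h) (exp (lam * beta * h)) /\
     C1_at (fun y => V y h) (exp ((lam - 1) * beta * h))) /\
  (forall h, 0 <= h ->
     deriv_nonneg (fun k => v3 r mu sigma beta lam C5 C6 (ybdry beta lam h) k) h 0) /\
  is_lim C6 p_infty 0.

From Stdlib Require Import Reals Lra.
From Coquelicot Require Import Coquelicot.
Open Scope R_scope.

(* Condition (a) kills the y^r1 term of the first branch.  Smooth fit at e^{lam beta h} and at
   e^{(lam-1) beta h} gives two 2x2 Vandermonde systems in (r1, r2) for the jumps C3 - C1, C4 - C2,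
   C3 - C5, C4 - C6 of the coefficients; with C1 = 0 these determine C3, C5 and the differences
   C4 - C2, C4 - C6.  With C5 known, the free-boundary condition (c) is the ODE C6' = c6' in h, and
   the decay condition (d) fixes its constant.  At h = 0 the coefficients follow by right
   continuity, since they are differentiable on [0, +oo). *)

(** * One-sided limits and gluing of derivatives *)

Definition slope (f : R -> R) (x y : R) : R := (f y - f x) / (y - x).

Lemma is_derive_slope (f : R -> R) (x l : R) :
  is_derive f x l <-> filterlim (slope f x) (locally' x) (locally l).
Proof.
  rewrite is_derive_Reals. split.
  - intros H P [eps HP]. destruct (H eps (cond_pos eps)) as [d Hd].
    exists d. intros y hy hyx. apply HP.
    specialize (Hd (y - x) (Rminus_eq_contra _ _ hyx) hy).
    rewrite Rplus_minus in Hd. exact Hd.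
  - intros H eps heps.
    destruct (H (fun z => Rabs (z - l) < eps)) as [d Hd].
    { exists (mkposreal eps heps). intros z hz. exact hz. }
    exists d. intros t ht0 htd.
    assert (E : x + t - x = t) by ring.
    specialize (Hd (x + t)). unfold slope in Hd. rewrite E in Hd.
    apply Hd; [|lra]. change (Rabs (x + t - x) < d). rewrite E. exact htd.
Qed.

Lemma at_left_le_locally' (x : R) : filter_le (at_left x) (locally' x).
Proof. intros P [d H]. exists d. intros y hy hlt. apply H; [exact hy | lra]. Qed.

Lemma at_right_le_locally' (x : R) : filter_le (at_right x) (locally' x).
Proof. intros P [d H]. exists d. intros y hy hlt. apply H; [exact hy | lra]. Qed.

Lemma at_left_of_interval (x d : R) (P : R -> Prop) :
  0 < d -> (forall y, x - d < y < x -> P y) -> at_left x P.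
Proof.
  intros hd H. exists (mkposreal d hd). intros y hy hlt. apply H.
  change (Rabs (y - x) < d) in hy. apply Rabs_def2 in hy. lra.
Qed.

Lemma at_right_of_interval (x d : R) (P : R -> Prop) :
  0 < d -> (forall y, x < y < x + d -> P y) -> at_right x P.
Proof.
  intros hd H. exists (mkposreal d hd). intros y hy hlt. apply H.
  change (Rabs (y - x) < d) in hy. apply Rabs_def2 in hy. lra.
Qed.

Lemma filterlim_locally'_of_sides (f : R -> R) (x : R) (G : (R -> Prop) -> Prop) :
  filterlim f (at_left x) G -> filterlim f (at_right x) G -> filterlim f (locally' x) G.
Proof.
  intros HL HR P HP.
  destruct (HL P HP) as [d1 H1], (HR P HP) as [d2 H2].
  exists (mkposreal _ (Rmin_pos _ _ (cond_pos d1) (cond_pos d2))). simpl. intros y hy hyx.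
  destruct (Rdichotomy _ _ hyx) as [hlt | hgt].
  - apply H1; [apply (ball_le _ _ _ (Rmin_l d1 d2)), hy | exact hlt].
  - apply H2; [apply (ball_le _ _ _ (Rmin_r d1 d2)), hy | exact hgt].
Qed.

Lemma continuous_of_locally' (f : R -> R) (x : R) :
  filterlim f (locally' x) (locally (f x)) -> continuous f x.
Proof.
  intros H P HP. destruct (H P HP) as [d Hd]. exists d. intros y hy.
  destruct (Req_dec y x) as [-> | hne]; [exact (locally_singleton _ _ HP) | exact (Hd y hy hne)].
Qed.

Lemma filterlim_unique_ext {F : (R -> Prop) -> Prop} {FF : ProperFilter F} (f g : R -> R) (a b : R) :
  F (fun y => f y = g y) -> filterlim f F (locally a) -> filterlim g F (locally b) -> a = b.
Proof.
  intros E Hf Hg. apply (filterlim_locally_unique (F := F) g); [| exact Hg].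
  exact (filterlim_ext_loc f g E Hf).
Qed.

Lemma continuous_of_ex_derive (f : R -> R) (x : R) : ex_derive f x -> continuous f x.
Proof. exact (ex_derive_continuous (K := R_AbsRing) (V := R_NormedModule) f x). Qed.

Section OneSided.

Variables (F : (R -> Prop) -> Prop) (x : R).
Context {FF : ProperFilter F}.
Hypothesis HF : filter_le F (locally' x).

Lemma filterlim_side_of_continuous (f : R -> R) :
  continuous f x -> filterlim f F (locally (f x)).
Proof.
  intros H. apply (filterlim_filter_le_1 _ HF).
  exact (filterlim_filter_le_1 _ (filter_le_within _) H).
Qed.

Lemma side_fit (f g : R -> R) (dg : R) :
  F (fun y => f y = g y) -> ex_derive f x -> is_derive g x dg ->
  f x = g x /\ Derive f x = dg.
Proof.
  intros E Df Dg.
  assert (Ef : f x = g x).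
  { apply (filterlim_unique_ext f g); [exact E | |];
      apply filterlim_side_of_continuous, continuous_of_ex_derive;
      [exact Df | exists dg; exact Dg]. }
  split; [exact Ef |].
  apply (filterlim_unique_ext (slope f x) (slope g x)).
  - apply (filter_imp (fun y => f y = g y)); [| exact E].
    intros y Ey. unfold slope. rewrite Ey, Ef. reflexivity.
  - apply (filterlim_filter_le_1 _ HF), is_derive_slope, Derive_correct, Df.
  - apply (filterlim_filter_le_1 _ HF), is_derive_slope, Dg.
Qed.

End OneSided.

Lemma is_derive_glue (f g1 g2 : R -> R) (x l : R) :
  at_left x (fun y => f y = g1 y) -> at_right x (fun y => f y = g2 y) ->
  f x = g1 x -> f x = g2 x -> is_derive g1 x l -> is_derive g2 x l -> is_derive f x l.
Proof.
  intros L R E1 E2 D1 D2. apply is_derive_slope, filterlim_locally'_of_sides.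
  - apply (filterlim_ext_loc (slope g1 x)).
    + revert L. apply filter_imp. intros y Ey. unfold slope. rewrite Ey, E1. reflexivity.
    + exact (filterlim_filter_le_1 _ (at_left_le_locally' x) (proj1 (is_derive_slope _ _ _) D1)).
  - apply (filterlim_ext_loc (slope g2 x)).
    + revert R. apply filter_imp. intros y Ey. unfold slope. rewrite Ey, E2. reflexivity.
    + exact (filterlim_filter_le_1 _ (at_right_le_locally' x) (proj1 (is_derive_slope _ _ _) D2)).
Qed.

Lemma continuous_glue (f g1 g2 : R -> R) (x : R) :
  at_left x (fun y => f y = g1 y) -> at_right x (fun y => f y = g2 y) ->
  f x = g1 x -> f x = g2 x -> continuous g1 x -> continuous g2 x -> continuous f x.
Proof.
  intros L R E1 E2 K1 K2. apply continuous_of_locally', filterlim_locally'_of_sides.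
  - apply (filterlim_ext_loc g1).
    + revert L. apply filter_imp. intros y Ey. symmetry. exact Ey.
    + rewrite E1. exact (filterlim_side_of_continuous _ _ (at_left_le_locally' x) _ K1).
  - apply (filterlim_ext_loc g2).
    + revert R. apply filter_imp. intros y Ey. symmetry. exact Ey.
    + rewrite E2. exact (filterlim_side_of_continuous _ _ (at_right_le_locally' x) _ K2).
Qed.

Lemma Derive_eq_on_interval (f g dg : R -> R) (a b y : R) :
  (forall z, a < z < b -> f z = g z) -> a < y < b -> is_derive g y (dg y) -> Derive f y = dg y.
Proof.
  intros E hy D. rewrite <- (is_derive_unique _ _ _ D). apply Derive_ext_loc.
  apply (filter_imp (fun z => a < z /\ z < b)); [exact E |].
  exact (open_and _ _ (open_gt a) (open_lt b) y hy).
Qed.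

Lemma C1_at_glue (f g1 g2 dg1 dg2 : R -> R) (y0 d : R) : 0 < d ->
  (forall y, y0 - d < y < y0 -> f y = g1 y) ->
  (forall y, y0 < y < y0 + d -> f y = g2 y) ->
  f y0 = g1 y0 -> f y0 = g2 y0 ->
  (forall y, y0 - d < y < y0 + d -> is_derive g1 y (dg1 y)) ->
  (forall y, y0 - d < y < y0 + d -> is_derive g2 y (dg2 y)) ->
  continuous dg1 y0 -> continuous dg2 y0 -> dg1 y0 = dg2 y0 ->
  C1_at f y0.
Proof.
  intros hd E1 E2 F1 F2 D1 D2 K1 K2 DD.
  assert (L1 := at_left_of_interval _ _ _ hd E1). assert (R2 := at_right_of_interval _ _ _ hd E2).
  assert (Df : is_derive f y0 (dg1 y0)).
  { apply (is_derive_glue f g1 g2); try assumption; [apply D1 | rewrite DD; apply D2]; lra. }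
  split; [exists (dg1 y0); exact Df |].
  apply (continuous_glue _ dg1 dg2); try assumption.
  - apply (at_left_of_interval _ d); [exact hd |]. intros y hy.
    apply (Derive_eq_on_interval _ g1 _ (y0 - d) y0); [exact E1 | exact hy | apply D1; lra].
  - apply (at_right_of_interval _ d); [exact hd |]. intros y hy.
    apply (Derive_eq_on_interval _ g2 _ y0 (y0 + d)); [exact E2 | exact hy | apply D2; lra].
  - exact (is_derive_unique _ _ _ Df).
  - rewrite <- DD. exact (is_derive_unique _ _ _ Df).
Qed.

(** * Derivatives on [0, +oo) *)

Lemma deriv_nonneg_of_is_derive (f : R -> R) (h d : R) : is_derive f h d -> deriv_nonneg f h d.
Proof.
  intros D. apply (filterlim_filter_le_1 (F := locally' h)); [| exact (proj1 (is_derive_slope _ _ _) D)].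
  intros P [e H]. exists e. intros y hy [_ hne]. exact (H y hy hne).
Qed.

Lemma is_derive_of_deriv_nonneg (f : R -> R) (h d : R) : 0 < h -> deriv_nonneg f h d -> is_derive f h d.
Proof.
  intros hh D. apply is_derive_slope.
  apply (filterlim_filter_le_1 _ (F := within (fun k => 0 <= k /\ k <> h) (locally h))); [| exact D].
  intros P [e H]. exists (mkposreal _ (Rmin_pos _ _ (cond_pos e) hh)). simpl. intros y hy hne.
  apply H; [apply (ball_le _ _ _ (Rmin_l e h)), hy |].
  apply (ball_le _ _ _ (Rmin_r e h)) in hy. change (Rabs (y - h) < h) in hy.
  apply Rabs_def2 in hy. split; [lra | exact hne].
Qed.

Lemma differentiable_nonneg_of_ex_derive (f : R -> R) :
  (forall h, ex_derive f h) -> differentiable_nonneg f.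
Proof. intros H h _. destruct (H h) as [d D]. exists d. exact (deriv_nonneg_of_is_derive f h d D). Qed.

Lemma deriv_nonneg_right_continuous (f : R -> R) (d : R) :
  deriv_nonneg f 0 d -> filterlim f (at_right 0) (locally (f 0)).
Proof.
  intros D.
  assert (Hs : filterlim (slope f 0) (at_right 0) (locally d)).
  { apply (filterlim_filter_le_1 _ (F := within (fun k => 0 <= k /\ k <> 0) (locally 0))); [| exact D].
    intros P [e H]. exists e. intros y hy hpos. apply H; [exact hy | split; lra]. }
  assert (Hk : filterlim (fun k => k) (at_right 0) (locally 0))
    by exact (filterlim_filter_le_1 _ (filter_le_within _) (filterlim_id _ _)).
  assert (Hm := filterlim_comp_2 _ _ Rmult Hk Hs (filterlim_mult (K := R_AbsRing) 0 d)).
  assert (Hp := filterlim_comp_2 _ _ Rplus (filterlim_const (f 0)) Hm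
                  (filterlim_plus (K := R_AbsRing) (V := R_NormedModule) (f 0) (mult 0 d))).
  change (filterlim (fun k => f 0 + k * slope f 0 k) (at_right 0) (locally (f 0 + 0 * d))) in Hp.
  rewrite Rmult_0_l, Rplus_0_r in Hp.
  refine (filterlim_ext_loc _ _ _ Hp).
  apply (at_right_of_interval 0 1); [lra |]. intros k hk. unfold slope. field. lra.
Qed.

Lemma eq_on_nonneg_of_eq_on_pos (f g : R -> R) :
  differentiable_nonneg f -> (forall k, 0 < k -> f k = g k) -> continuous g 0 ->
  forall h, 0 <= h -> f h = g h.
Proof.
  intros Df E Kg h hh. destruct (Rle_lt_or_eq_dec _ _ hh) as [hpos | <-]; [exact (E h hpos) |].
  destruct (Df 0 (Rle_refl 0)) as [d D].
  apply (filterlim_unique_ext (F := at_right 0) f g).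
  - apply (at_right_of_interval 0 1); [lra |]. intros k hk. apply E. lra.
  - exact (deriv_nonneg_right_continuous f d D).
  - exact (filterlim_side_of_continuous _ _ (at_right_le_locally' 0) _ Kg).
Qed.

Lemma eq_0_of_derive_0_of_lim_0 (D : R -> R) :
  (forall h, 0 < h -> is_derive D h 0) -> is_lim D p_infty 0 -> forall h, 0 < h -> D h = 0.
Proof.
  intros HD HL h hh.
  assert (Const : forall k, 0 < k -> D k = D h).
  { intros k hk. assert (hm := Rmin_pos _ _ hh hk).
    destruct (MVT_gen D h k (fun _ => 0)) as [c [_ Hc]].
    - intros x hx. apply HD. lra.
    - intros x hx. apply continuity_pt_filterlim, continuous_of_ex_derive.
      exists 0. apply HD. lra.
    - lra. }
  assert (Lh : is_lim (fun _ => D h) p_infty 0).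
  { apply (is_lim_ext_loc D); [| exact HL]. exists 0. intros k hk. exact (Const k hk). }
  apply is_lim_unique in Lh. rewrite Lim_const in Lh. injection Lh. easy.
Qed.

Lemma is_derive_factor (A B : R -> R) (x a e P : R) :
  P <> 0 -> is_derive A x a -> is_derive (fun t => A t + B t * P) x e ->
  is_derive B x ((e - a) / P).
Proof.
  intros hP DA DS.
  apply (is_derive_ext (fun t => / P * ((A t + B t * P) - A t))).
  { intros t. match goal with |- ?u = ?w => change (@eq R u w) end. field. exact hP. }
  assert (D := is_derive_scal _ _ (/ P) _ (is_derive_minus _ _ _ _ _ DS DA)).
  replace ((e - a) / P) with (/ P * (e - a)) by (field; exact hP). exact D.
Qed.

(** * Limits at infinity *)

Lemma is_lim_exp_neg_mult (c : R) (g : R -> R) :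
  c < 0 -> is_lim g p_infty p_infty -> is_lim (fun y => exp (c * g y)) p_infty 0.
Proof.
  intros hc Hg. apply (is_lim_comp exp (fun y => c * g y) p_infty 0 m_infty is_lim_exp_m).
  - replace m_infty with (Rbar_mult c p_infty)
      by (simpl; destruct (Rle_dec 0 c); [exfalso; lra | reflexivity]).
    apply is_lim_scal_l, Hg.
  - exists 0. intros; discriminate.
Qed.

Lemma is_lim_Rpower_neg (p : R) : p < 0 -> is_lim (fun y => Rpower y p) p_infty 0.
Proof. intros hp. exact (is_lim_exp_neg_mult p ln hp is_lim_ln_p). Qed.

Lemma is_lim_scal_0 (f : R -> R) (a : R) (x : Rbar) :
  is_lim f x 0 -> is_lim (fun y => a * f y) x 0.
Proof. intros H. generalize (is_lim_scal_l f a x 0 H). simpl. rewrite Rmult_0_r. easy. Qed.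

Lemma power_combination_lim_0 (p q A B : R) : 0 < p -> q < p ->
  is_lim (fun y => A * Rpower y p + B * Rpower y q) p_infty 0 -> A = 0.
Proof.
  intros hp hqp H.
  assert (L0 := is_lim_mult _ _ _ _ _ H (is_lim_Rpower_neg (- p) ltac:(lra)) I).
  assert (LA : is_lim (fun y => (A * Rpower y p + B * Rpower y q) * Rpower y (- p)) p_infty (A + 0)).
  { apply (is_lim_ext (fun y => A + B * Rpower y (q - p))).
    - intros y. unfold Rpower. rewrite Rmult_plus_distr_r, !Rmult_assoc, <- !exp_plus.
      replace (p * ln y + - p * ln y) with 0 by ring. rewrite exp_0.
      replace (q * ln y + - p * ln y) with ((q - p) * ln y) by ring. ring.
    - apply is_lim_plus'; [apply is_lim_const | apply is_lim_scal_0, is_lim_Rpower_neg; lra]. }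
  apply is_lim_unique in L0, LA. rewrite L0 in LA. simpl in LA. injection LA. lra.
Qed.

Lemma Rpower_exp (u p : R) : Rpower (exp u) p = exp (p * u).
Proof. unfold Rpower. rewrite ln_exp. reflexivity. Qed.

Lemma exp_sub_eq (x y z : R) : x = y - z -> exp x = exp y / exp z.
Proof. intros ->. unfold Rminus. rewrite exp_plus, exp_Ropp. reflexivity. Qed.

Lemma mult_exp_eq_iff (x y u : R) : x * exp u = y * exp u <-> x = y.
Proof.
  split; [| intros ->; reflexivity].
  intros E. apply (Rmult_eq_reg_r (exp u)); [exact E | apply Rgt_not_eq, exp_pos].
Qed.

Lemma linear_system_solve (p q X Y c : R) : p <> q ->
  (X + Y + c = 0 /\ p * X + q * Y + c = 0) <->
  (X = - (1 - q) * c / (p - q) /\ Y = (1 - p) * c / (p - q)).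
Proof.
  intros hpq. assert (p - q <> 0) by lra. split.
  - intros [E1 E2]. split; apply (Rmult_eq_reg_l (p - q)); auto.
    + transitivity ((p * X + q * Y + c) - q * (X + Y + c) - (1 - q) * c); [ring |].
      rewrite E1, E2. field. auto.
    + transitivity (p * (X + Y + c) - (p * X + q * Y + c) + (1 - p) * c); [ring |].
      rewrite E1, E2. field. auto.
  - intros [-> ->]. split; field; auto.
Qed.

Lemma match_iff_diff_0 (u1 u2 d1 d2 y : R) : 0 < y ->
  (u1 = u2 /\ d1 = d2 <-> u2 - u1 = 0 /\ y * (d2 - d1) = 0).
Proof.
  intros hy. split; intros [E1 E2]; split; try lra.
  - rewrite E2. ring.
  - apply Rmult_integral in E2. destruct E2; lra.
Qed.

(** * The characteristic roots *)

Section RootFacts.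

Variables r mu sigma : R.
Hypotheses (hr : 0 < r) (hmu : r < mu) (hsigma : 0 < sigma).

Local Notation kap := (kappa r mu sigma).
Local Notation rho1 := (r1 r mu sigma).
Local Notation rho2 := (r2 r mu sigma).

Lemma kappa_pos : 0 < kap.
Proof. unfold kappa. apply Rdiv_lt_0_compat; lra. Qed.

Let ratio_pos : 0 < 8 * r / kap ^ 2.
Proof.
  assert (h8 : 0 < 8 * r) by lra.
  apply Rdiv_lt_0_compat; [exact h8 | apply pow_lt, kappa_pos].
Qed.

Let disc_gt_1 : 1 < sqrt (1 + 8 * r / kap ^ 2).
Proof. generalize ratio_pos; intros. rewrite <- sqrt_1 at 1. apply sqrt_lt_1; lra. Qed.

Lemma r1_gt_1 : 1 < rho1.
Proof. generalize disc_gt_1. unfold r1. lra. Qed.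

Lemma r2_lt_0 : rho2 < 0.
Proof. generalize disc_gt_1. unfold r2. lra. Qed.

Lemma r1_add_r2 : rho1 + rho2 = 1.
Proof. unfold r1, r2. field. Qed.

Lemma kappa_sq : kap ^ 2 = - 2 * r / (rho1 * rho2).
Proof.
  assert (hk : kap <> 0) by (apply Rgt_not_eq, kappa_pos).
  assert (hprod : rho1 * rho2 < 0) by (generalize r1_gt_1 r2_lt_0; intros; nra).
  assert (hsq : sqrt (1 + 8 * r / kap ^ 2) * sqrt (1 + 8 * r / kap ^ 2) = 1 + 8 * r / kap ^ 2)
    by (apply sqrt_sqrt; generalize ratio_pos; intros; lra).
  apply (Rmult_eq_reg_r (rho1 * rho2)); [| lra].
  unfold Rdiv. rewrite Rmult_assoc, Rinv_l, Rmult_1_r by lra.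
  unfold r1, r2. set (s := sqrt _) in *.
  replace ((1 + s) / 2 * ((1 - s) / 2)) with ((1 - s * s) / 4) by field.
  rewrite hsq. field. exact hk.
Qed.

End RootFacts.

(** * The free boundary problem *)

Section FreeBoundaryProblem.

Variables r mu sigma beta lam : R.
Hypotheses (hr : 0 < r) (hmu : r < mu) (hsigma : 0 < sigma) (hbeta : 0 < beta)
  (hlam0 : 0 < lam) (hlam1 : lam < 1).

Local Notation kap := (kappa r mu sigma).
Local Notation rho1 := (r1 r mu sigma).
Local Notation rho2 := (r2 r mu sigma).
Local Notation c2 := (C2def r mu sigma beta lam).
Local Notation c3 := (C3def r mu sigma beta lam).
Local Notation c4 := (C4def r mu sigma beta lam).
Local Notation c5 := (C5def r mu sigma beta lam).
Local Notation c6 := (C6def r mu sigma beta lam).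
Local Notation V := (v r mu sigma beta lam).
Local Notation V1 := (v1 r mu sigma beta lam).
Local Notation V2 := (v2 r mu sigma beta lam).
Local Notation V3 := (v3 r mu sigma beta lam).
Local Notation yhi h := (exp (lam * beta * h)).
Local Notation ylo h := (exp ((lam - 1) * beta * h)).
Local Notation yfb h := (ybdry beta lam h).

Local Ltac root_facts :=
  generalize (r1_gt_1 r mu sigma hr hmu hsigma) (r2_lt_0 r mu sigma hr hmu hsigma)
    (r1_add_r2 r mu sigma); intros.

Definition dv1 (C1 C2 : R -> R) (y h : R) : R :=
  C1 h * rho1 * Rpower y rho1 / y + C2 h * rho2 * Rpower y rho2 / y.
Definition dv2 (C3 C4 : R -> R) (y h : R) : R :=
  dv1 C3 C4 y h + (ln y - lam * beta * h + kap ^ 2 / (2 * r)) / (r * beta).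
Definition dv3 (C5 C6 : R -> R) (y h : R) : R := dv1 C5 C6 y h - h / r.

(* At either free boundary, the particular solutions of the two adjacent branches differ by [jump y],
   and so does y times the difference of their y-derivatives. *)
Definition jump (y : R) : R := y * kap ^ 2 / (2 * r ^ 2 * beta).

Lemma ylo_le_yhi h : 0 <= h -> ylo h <= yhi h.
Proof.
  intros hh. destruct (Req_dec h 0) as [-> | hn]; [right; f_equal; ring |].
  left. apply exp_increasing. nra.
Qed.

Lemma ylo_lt_yhi h : 0 < h -> ylo h < yhi h.
Proof. intros hh. apply exp_increasing. nra. Qed.

Lemma c3_at_yhi h :
  c3 h * exp (rho1 * (lam * beta * h)) = - (1 - rho2) * jump (yhi h) / (rho1 - rho2).
Proof.
  root_facts. unfold C3def, jump.
  rewrite (exp_sub_eq (lam * (1 - rho1) * beta * h) (lam * beta * h) (rho1 * (lam * beta * h))) by ring.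
  field. repeat split; try lra. apply Rgt_not_eq, exp_pos.
Qed.

Lemma c4_sub_c2_at_yhi h :
  (c4 h - c2 h) * exp (rho2 * (lam * beta * h)) = (1 - rho1) * jump (yhi h) / (rho1 - rho2).
Proof.
  root_facts. unfold C4def, C2def, jump.
  rewrite (exp_sub_eq (lam * (1 - rho2) * beta * h) (lam * beta * h) (rho2 * (lam * beta * h))) by ring.
  field. repeat split; try lra. apply Rgt_not_eq, exp_pos.
Qed.

Lemma c3_sub_c5_at_ylo h :
  (c3 h - c5 h) * exp (rho1 * ((lam - 1) * beta * h)) = - (1 - rho2) * jump (ylo h) / (rho1 - rho2).
Proof.
  root_facts. unfold C3def, C5def, jump.
  rewrite (exp_sub_eq ((lam - 1) * (1 - rho1) * beta * h) ((lam - 1) * beta * h)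
             (rho1 * ((lam - 1) * beta * h))) by ring.
  field. repeat split; try lra. apply Rgt_not_eq, exp_pos.
Qed.

Lemma c4_sub_c6_at_ylo h :
  (c4 h - c6 h) * exp (rho2 * ((lam - 1) * beta * h)) = (1 - rho1) * jump (ylo h) / (rho1 - rho2).
Proof.
  root_facts. unfold C4def, jump.
  rewrite (exp_sub_eq ((lam - 1) * (1 - rho2) * beta * h) ((lam - 1) * beta * h)
             (rho2 * ((lam - 1) * beta * h))) by ring.
  field. repeat split; try lra. apply Rgt_not_eq, exp_pos.
Qed.

Section Coefficients.

Variables C1 C2 C3 C4 C5 C6 : R -> R.

Lemma is_derive_v1 h y : 0 < y -> is_derive (fun z => V1 C1 C2 z h) y (dv1 C1 C2 y h).
Proof. intros hy. unfold v1, dv1, Rpower. auto_derive; [tauto |]. field. lra. Qed.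

Lemma is_derive_v2 h y : 0 < y -> is_derive (fun z => V2 C3 C4 z h) y (dv2 C3 C4 y h).
Proof. intros hy. unfold v2, dv2, dv1, Rpower. auto_derive; [tauto |]. field. lra. Qed.

Lemma is_derive_v3 h y : 0 < y -> is_derive (fun z => V3 C5 C6 z h) y (dv3 C5 C6 y h).
Proof. intros hy. unfold v3, dv3, dv1, Rpower. auto_derive; [tauto |]. field. lra. Qed.

Lemma continuous_dv1 h y : 0 < y -> continuous (fun z => dv1 C1 C2 z h) y.
Proof. intros hy. apply continuous_of_ex_derive. unfold dv1, Rpower. auto_derive. lra. Qed.

Lemma continuous_dv2 h y : 0 < y -> continuous (fun z => dv2 C3 C4 z h) y.
Proof. intros hy. apply continuous_of_ex_derive. unfold dv2, dv1, Rpower. auto_derive. lra. Qed.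

Lemma continuous_dv3 h y : 0 < y -> continuous (fun z => dv3 C5 C6 z h) y.
Proof. intros hy. apply continuous_of_ex_derive. unfold dv3, dv1, Rpower. auto_derive. lra. Qed.

Lemma v_eq_v1 y h : ylo h < y -> yhi h <= y -> V C1 C2 C3 C4 C5 C6 y h = V1 C1 C2 y h.
Proof.
  intros. unfold v. destruct (Rle_dec _ _); [lra |]. destruct (Rlt_dec _ _); [lra | reflexivity].
Qed.

Lemma v_eq_v2 y h : ylo h < y < yhi h -> V C1 C2 C3 C4 C5 C6 y h = V2 C3 C4 y h.
Proof.
  intros. unfold v. destruct (Rle_dec _ _); [lra |]. destruct (Rlt_dec _ _); [reflexivity | lra].
Qed.

Lemma v_eq_v3 y h : y <= ylo h -> V C1 C2 C3 C4 C5 C6 y h = V3 C5 C6 y h.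
Proof. intros. unfold v. destruct (Rle_dec _ _); [reflexivity | lra]. Qed.

Local Notation Vh h := (fun y => V C1 C2 C3 C4 C5 C6 y h).

Lemma v_sub_y_dv_far h y : 0 <= h -> yhi h < y ->
  V C1 C2 C3 C4 C5 C6 y h - y * Derive (Vh h) y =
  C1 h * (1 - rho1) * Rpower y rho1 + C2 h * (1 - rho2) * Rpower y rho2 - / (r * beta) * yhi h.
Proof.
  intros hh hy. assert (hlo := ylo_le_yhi h hh).
  assert (hy0 : 0 < y) by (generalize (exp_pos (lam * beta * h)); lra).
  rewrite (Derive_eq_on_interval _ (fun z => V1 C1 C2 z h) (fun z => dv1 C1 C2 z h) (yhi h) (y + 1) y);
    [| intros z hz; apply v_eq_v1; lra | lra | apply is_derive_v1, hy0].
  rewrite v_eq_v1 by lra. unfold v1, dv1. field. lra.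
Qed.

Lemma condition_a_iff h : 0 <= h ->
  is_lim (fun y => V C1 C2 C3 C4 C5 C6 y h - y * Derive (Vh h) y) p_infty (- / (r * beta) * yhi h) <->
  is_lim (fun y => C1 h * (1 - rho1) * Rpower y rho1 + C2 h * (1 - rho2) * Rpower y rho2) p_infty 0.
Proof.
  intros hh.
  set (E := fun y => V C1 C2 C3 C4 C5 C6 y h - y * Derive (Vh h) y).
  set (P := fun y => C1 h * (1 - rho1) * Rpower y rho1 + C2 h * (1 - rho2) * Rpower y rho2).
  set (L := - / (r * beta) * yhi h).
  assert (Far : Rbar_locally' p_infty (fun y => E y = P y + L)).
  { exists (yhi h). intros y hy. unfold E, P, L. rewrite v_sub_y_dv_far by assumption. ring. }
  split; intros H.
  - replace (Finite 0) with (Finite (L - L)) by (f_equal; ring).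
    apply (is_lim_ext_loc (fun y => E y - L)); [revert Far; apply filter_imp; intros y ->; ring |].
    apply is_lim_minus'; [exact H | apply is_lim_const].
  - replace (Finite L) with (Finite (0 + L)) by (f_equal; ring).
    apply (is_lim_ext_loc (fun y => P y + L));
      [revert Far; apply filter_imp; intros y ->; reflexivity |].
    apply is_lim_plus'; [exact H | apply is_lim_const].
Qed.

Lemma smooth_fit_hi_iff h :
  (V1 C1 C2 (yhi h) h = V2 C3 C4 (yhi h) h /\ dv1 C1 C2 (yhi h) h = dv2 C3 C4 (yhi h) h) <->
  (C3 h - C1 h = c3 h /\ C4 h - C2 h = c4 h - c2 h).
Proof.
  root_facts. rewrite (match_iff_diff_0 _ _ _ _ _ (exp_pos (lam * beta * h))).
  rewrite <- (mult_exp_eq_iff (C3 h - C1 h) (c3 h) (rho1 * (lam * beta * h))),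
    <- (mult_exp_eq_iff (C4 h - C2 h) (c4 h - c2 h) (rho2 * (lam * beta * h))).
  rewrite c3_at_yhi, c4_sub_c2_at_yhi, <- linear_system_solve by lra.
  set (a := lam * beta * h).
  replace (V2 C3 C4 (exp a) h - V1 C1 C2 (exp a) h) with
    ((C3 h - C1 h) * exp (rho1 * a) + (C4 h - C2 h) * exp (rho2 * a) + jump (exp a))
    by (unfold v1, v2, jump; rewrite !Rpower_exp, ln_exp; unfold a; field; lra).
  replace (exp a * (dv2 C3 C4 (exp a) h - dv1 C1 C2 (exp a) h)) with
    (rho1 * ((C3 h - C1 h) * exp (rho1 * a)) + rho2 * ((C4 h - C2 h) * exp (rho2 * a)) + jump (exp a))
    by (unfold dv2, dv1, jump; rewrite !Rpower_exp, ln_exp; unfold a;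
        field; repeat split; try lra; apply Rgt_not_eq, exp_pos).
  reflexivity.
Qed.

Lemma smooth_fit_lo_iff h :
  (V2 C3 C4 (ylo h) h = V3 C5 C6 (ylo h) h /\ dv2 C3 C4 (ylo h) h = dv3 C5 C6 (ylo h) h) <->
  (C3 h - C5 h = c3 h - c5 h /\ C4 h - C6 h = c4 h - c6 h).
Proof.
  root_facts.
  transitivity (V3 C5 C6 (ylo h) h = V2 C3 C4 (ylo h) h /\ dv3 C5 C6 (ylo h) h = dv2 C3 C4 (ylo h) h).
  { split; intros [E1 E2]; split; symmetry; assumption. }
  rewrite (match_iff_diff_0 _ _ _ _ _ (exp_pos ((lam - 1) * beta * h))).
  rewrite <- (mult_exp_eq_iff (C3 h - C5 h) (c3 h - c5 h) (rho1 * ((lam - 1) * beta * h))),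
    <- (mult_exp_eq_iff (C4 h - C6 h) (c4 h - c6 h) (rho2 * ((lam - 1) * beta * h))).
  rewrite c3_sub_c5_at_ylo, c4_sub_c6_at_ylo, <- linear_system_solve by lra.
  set (b := (lam - 1) * beta * h).
  replace (V2 C3 C4 (exp b) h - V3 C5 C6 (exp b) h) with
    ((C3 h - C5 h) * exp (rho1 * b) + (C4 h - C6 h) * exp (rho2 * b) + jump (exp b))
    by (unfold v2, v3, jump; rewrite !Rpower_exp, ln_exp; unfold b; field; lra).
  replace (exp b * (dv2 C3 C4 (exp b) h - dv3 C5 C6 (exp b) h)) with
    (rho1 * ((C3 h - C5 h) * exp (rho1 * b)) + rho2 * ((C4 h - C6 h) * exp (rho2 * b)) + jump (exp b))
    by (unfold dv2, dv3, dv1, jump; rewrite !Rpower_exp, ln_exp; unfold b;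
        field; repeat split; try lra; apply Rgt_not_eq, exp_pos).
  reflexivity.
Qed.

Lemma C1_at_yhi_iff h : 0 < h ->
  C1_at (Vh h) (yhi h) <->
  V1 C1 C2 (yhi h) h = V2 C3 C4 (yhi h) h /\ dv1 C1 C2 (yhi h) h = dv2 C3 C4 (yhi h) h.
Proof.
  intros hh. assert (hlt := ylo_lt_yhi h hh). assert (hlo := exp_pos ((lam - 1) * beta * h)).
  assert (Ef : Vh h (yhi h) = V1 C1 C2 (yhi h) h) by (apply v_eq_v1; lra).
  split.
  - intros [Df _].
    assert (L2 : at_left (yhi h) (fun y => Vh h y = V2 C3 C4 y h)).
    { apply (at_left_of_interval _ (yhi h - ylo h)); [lra |]. intros y hy. apply v_eq_v2. lra. }
    assert (R1 : at_right (yhi h) (fun y => Vh h y = V1 C1 C2 y h)).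
    { apply (at_right_of_interval _ 1); [lra |]. intros y hy. apply v_eq_v1; lra. }
    destruct (side_fit _ _ (at_left_le_locally' _) _ _ _ L2 Df (is_derive_v2 h (yhi h) ltac:(lra)))
      as [F2 D2].
    destruct (side_fit _ _ (at_right_le_locally' _) _ _ _ R1 Df (is_derive_v1 h (yhi h) ltac:(lra)))
      as [F1 D1].
    split; congruence.
  - intros [Fv Fd].
    apply (C1_at_glue (Vh h) (fun y => V2 C3 C4 y h) (fun y => V1 C1 C2 y h)
             (fun y => dv2 C3 C4 y h) (fun y => dv1 C1 C2 y h) (yhi h) (yhi h - ylo h) ltac:(lra)).
    + intros y hy. apply v_eq_v2. lra.
    + intros y hy. apply v_eq_v1; lra.
    + exact (eq_trans Ef Fv).
    + exact Ef.
    + intros y hy. apply is_derive_v2. lra.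
    + intros y hy. apply is_derive_v1. lra.
    + apply continuous_dv2. lra.
    + apply continuous_dv1. lra.
    + symmetry. exact Fd.
Qed.

Lemma C1_at_ylo_iff h : 0 < h ->
  C1_at (Vh h) (ylo h) <->
  V2 C3 C4 (ylo h) h = V3 C5 C6 (ylo h) h /\ dv2 C3 C4 (ylo h) h = dv3 C5 C6 (ylo h) h.
Proof.
  intros hh. assert (hlt := ylo_lt_yhi h hh). assert (hlo := exp_pos ((lam - 1) * beta * h)).
  assert (hd : 0 < Rmin (ylo h) (yhi h - ylo h)) by (apply Rmin_pos; lra).
  assert (hd1 := Rmin_l (ylo h) (yhi h - ylo h)). assert (hd2 := Rmin_r (ylo h) (yhi h - ylo h)).
  set (d := Rmin (ylo h) (yhi h - ylo h)) in *.
  assert (Ef : Vh h (ylo h) = V3 C5 C6 (ylo h) h) by (apply v_eq_v3; lra).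
  split.
  - intros [Df _].
    assert (R2 : at_right (ylo h) (fun y => Vh h y = V2 C3 C4 y h)).
    { apply (at_right_of_interval _ d); [lra |]. intros y hy. apply v_eq_v2. lra. }
    assert (L3 : at_left (ylo h) (fun y => Vh h y = V3 C5 C6 y h)).
    { apply (at_left_of_interval _ d); [lra |]. intros y hy. apply v_eq_v3. lra. }
    destruct (side_fit _ _ (at_right_le_locally' _) _ _ _ R2 Df (is_derive_v2 h _ hlo)) as [F2 D2].
    destruct (side_fit _ _ (at_left_le_locally' _) _ _ _ L3 Df (is_derive_v3 h _ hlo)) as [F3 D3].
    split; congruence.
  - intros [Fv Fd].
    apply (C1_at_glue (Vh h) (fun y => V3 C5 C6 y h) (fun y => V2 C3 C4 y h)
             (fun y => dv3 C5 C6 y h) (fun y => dv2 C3 C4 y h) (ylo h) d hd).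
    + intros y hy. apply v_eq_v3. lra.
    + intros y hy. apply v_eq_v2. lra.
    + exact Ef.
    + exact (eq_trans Ef (eq_sym Fv)).
    + intros y hy. apply is_derive_v3. lra.
    + intros y hy. apply is_derive_v2. lra.
    + apply continuous_dv3. lra.
    + apply continuous_dv2. lra.
    + symmetry. exact Fd.
Qed.

(* For h = 0 both free boundaries sit at y = 1 and the middle region is empty. *)
Lemma C1_at_1_of_fit :
  V1 C1 C2 1 0 = V3 C5 C6 1 0 -> dv1 C1 C2 1 0 = dv3 C5 C6 1 0 -> C1_at (Vh 0) 1.
Proof.
  intros Fv Fd.
  assert (e1 : yhi 0 = 1) by (rewrite Rmult_0_r; apply exp_0).
  assert (e0 : ylo 0 = 1) by (rewrite Rmult_0_r; apply exp_0).
  assert (Ef : Vh 0 1 = V3 C5 C6 1 0) by (apply v_eq_v3; lra).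
  apply (C1_at_glue (Vh 0) (fun y => V3 C5 C6 y 0) (fun y => V1 C1 C2 y 0)
           (fun y => dv3 C5 C6 y 0) (fun y => dv1 C1 C2 y 0) 1 1 Rlt_0_1).
  - intros y hy. apply v_eq_v3. lra.
  - intros y hy. apply v_eq_v1; lra.
  - exact Ef.
  - exact (eq_trans Ef (eq_sym Fv)).
  - intros y hy. apply is_derive_v3. lra.
  - intros y hy. apply is_derive_v1. lra.
  - apply continuous_dv3. lra.
  - apply continuous_dv1. lra.
  - symmetry. exact Fd.
Qed.

End Coefficients.

Definition dc5 (h : R) : R :=
  (1 - rho2) * kap ^ 2 / (2 * (rho1 - rho2) * beta * r ^ 2) * ((1 - rho1) * beta)
  * ((lam - 1) * exp ((lam - 1) * (1 - rho1) * beta * h) - lam * exp (lam * (1 - rho1) * beta * h)).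

Definition dc6 (h : R) : R :=
  Rpower (1 - lam) (rho1 - rho2) / ((rho1 - rho2) * beta * r) * beta
  * ((lam - 1) * exp ((lam - 1) * (1 - rho2) * beta * h)
     - lam * exp ((lam * (1 - rho2) - (rho1 - rho2)) * beta * h)).

Lemma is_derive_c5 h : is_derive c5 h (dc5 h).
Proof. root_facts. unfold C5def, dc5. auto_derive; [exact I |]. field. repeat split; lra. Qed.

Lemma is_derive_c6 h : is_derive c6 h (dc6 h).
Proof.
  root_facts. assert (lam * (1 - rho2) - (rho1 - rho2) < 0) by nra.
  unfold C6def, dc6. auto_derive; [exact I |]. field. repeat split; lra.
Qed.

Lemma ex_derive_c2 h : ex_derive c2 h.
Proof. unfold C2def, C6def. auto_derive. exact I. Qed.

Lemma ex_derive_c3 h : ex_derive c3 h.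
Proof. unfold C3def. auto_derive. exact I. Qed.

Lemma ex_derive_c4 h : ex_derive c4 h.
Proof. unfold C4def, C6def. auto_derive. exact I. Qed.

Lemma ex_derive_c5 h : ex_derive c5 h.
Proof. exists (dc5 h). apply is_derive_c5. Qed.

Lemma ex_derive_c6 h : ex_derive c6 h.
Proof. exists (dc6 h). apply is_derive_c6. Qed.

Lemma is_lim_c6 : is_lim c6 p_infty 0.
Proof.
  root_facts.
  set (e1 := (lam - 1) * (1 - rho2) * beta). set (e2 := (lam * (1 - rho2) - (rho1 - rho2)) * beta).
  assert (he1 : e1 < 0) by (unfold e1; assert (0 < (1 - lam) * (1 - rho2) * beta) by
    (repeat apply Rmult_lt_0_compat; lra); nra).
  assert (he2 : e2 < 0) by (unfold e2; assert (lam * (1 - rho2) - (rho1 - rho2) < 0) by nra; nra).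
  apply (is_lim_ext (fun h => Rpower (1 - lam) (rho1 - rho2) / ((rho1 - rho2) * beta * r)
    * (1 / (1 - rho2) * exp (e1 * h) + - (lam / (lam * (1 - rho2) - (rho1 - rho2))) * exp (e2 * h)))).
  { intros h. unfold C6def, e1, e2. f_equal. rewrite !Rmult_assoc. ring. }
  apply is_lim_scal_0. replace (Finite 0) with (Finite (0 + 0)) by (f_equal; ring).
  apply is_lim_plus'; apply is_lim_scal_0, is_lim_exp_neg_mult, is_lim_id; assumption.
Qed.

Lemma is_derive_v3_h (C5 C6 : R -> R) (d5 d6 y h : R) :
  is_derive C5 h d5 -> is_derive C6 h d6 ->
  is_derive (fun k => V3 C5 C6 y k) h
    (d5 * Rpower y rho1 + d6 * Rpower y rho2 - / r * y - / (r * beta) * ((lam - 1) * beta * ylo h)).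
Proof.
  intros D5 D6. unfold v3. auto_derive.
  - split; [exists d5; exact D5 | split; [exists d6; exact D6 | exact I]].
  - replace (Derive (fun x : R => C5 x) h) with d5 by (symmetry; apply is_derive_unique, D5).
    replace (Derive (fun x : R => C6 x) h) with d6 by (symmetry; apply is_derive_unique, D6).
    field. lra.
Qed.

(* By [is_derive_v3_h], the left-hand side is the h-derivative of [v3 c5 c6] at fixed y = ybdry h. *)
Lemma free_boundary_identity h :
  dc5 h * Rpower (yfb h) rho1 + dc6 h * Rpower (yfb h) rho2
  - / r * yfb h - / (r * beta) * ((lam - 1) * beta * ylo h) = 0.
Proof.
  root_facts. assert (hk := kappa_sq r mu sigma hr hmu hsigma).
  unfold ybdry, dc5, dc6.
  rewrite <- !Rpower_mult_distr by (auto; try lra; apply exp_pos).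
  rewrite !Rpower_exp.
  replace (Rpower (1 - lam) (rho1 - rho2)) with (Rpower (1 - lam) rho1 / Rpower (1 - lam) rho2)
    by (unfold Rminus, Rdiv; rewrite Rpower_plus, Rpower_Ropp; reflexivity).
  set (u := (lam - 1) * beta * h).
  rewrite (exp_sub_eq ((lam - 1) * (1 - rho1) * beta * h) u (rho1 * u)) by (unfold u; ring).
  rewrite (exp_sub_eq (lam * (1 - rho1) * beta * h) (u + beta * h) (rho1 * u + rho1 * beta * h))
    by (unfold u; ring).
  rewrite (exp_sub_eq ((lam - 1) * (1 - rho2) * beta * h) u (rho2 * u)) by (unfold u; ring).
  rewrite (exp_sub_eq ((lam * (1 - rho2) - (rho1 - rho2)) * beta * h) (u + beta * h)
             (rho2 * u + rho1 * beta * h)) by (unfold u; ring).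
  rewrite !exp_plus, hk.
  replace rho2 with (1 - rho1) by lra.
  assert (P1 := exp_pos (rho1 * u)). assert (P2 := exp_pos ((1 - rho1) * u)).
  assert (P3 := exp_pos (rho1 * beta * h)).
  assert (P4 : 0 < Rpower (1 - lam) (1 - rho1)) by apply exp_pos.
  field. repeat split; try lra; nra.
Qed.

Lemma free_boundary_explicit h : deriv_nonneg (fun k => V3 c5 c6 (yfb h) k) h 0.
Proof.
  rewrite <- (free_boundary_identity h).
  apply deriv_nonneg_of_is_derive, is_derive_v3_h; [apply is_derive_c5 | apply is_derive_c6].
Qed.

Lemma is_derive_C6_of_free_boundary (C5 C6 : R -> R) h : 0 < h ->
  (forall k, 0 < k -> C5 k = c5 k) ->
  deriv_nonneg (fun k => V3 C5 C6 (yfb h) k) h 0 -> is_derive C6 h (dc6 h).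
Proof.
  intros hh E5 Dfb.
  assert (D5 : is_derive C5 h (dc5 h)).
  { apply (is_derive_ext_loc c5); [| apply is_derive_c5].
    apply (filter_imp (fun k => 0 < k)); [| exact (open_gt 0 h hh)].
    intros k hk. symmetry. exact (E5 k hk). }
  assert (DA := is_derive_v3_h C5 (fun _ => 0) _ 0 (yfb h) h D5 (is_derive_const 0 h)).
  assert (HP : Rpower (yfb h) rho2 <> 0) by apply Rgt_not_eq, exp_pos.
  assert (DS : is_derive (fun k => V3 C5 (fun _ => 0) (yfb h) k + C6 k * Rpower (yfb h) rho2) h 0).
  { apply (is_derive_ext (fun k => V3 C5 C6 (yfb h) k)).
    - intros k. unfold v3. match goal with |- ?u = ?w => change (@eq R u w) end. ring.
    - exact (is_derive_of_deriv_nonneg _ _ _ hh Dfb). }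
  assert (DC6 := is_derive_factor _ _ _ _ _ _ HP DA DS).
  replace (dc6 h) with ((0 - (dc5 h * Rpower (yfb h) rho1 + 0 * Rpower (yfb h) rho2 - / r * yfb h
                              - / (r * beta) * ((lam - 1) * beta * ylo h))) / Rpower (yfb h) rho2);
    [exact DC6 |].
  generalize (free_boundary_identity h). intros I.
  apply (Rmult_eq_reg_r (Rpower (yfb h) rho2)); [| exact HP].
  unfold Rdiv. rewrite Rmult_assoc, Rinv_l, Rmult_1_r by exact HP. lra.
Qed.

(* Condition (c) gives C6' = c6' on (0, oo), and condition (d) fixes the constant. *)
Lemma C6_eq_c6 (C5 C6 : R -> R) :
  (forall k, 0 < k -> C5 k = c5 k) ->
  (forall h, 0 <= h -> deriv_nonneg (fun k => V3 C5 C6 (yfb h) k) h 0) ->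
  is_lim C6 p_infty 0 -> forall h, 0 < h -> C6 h = c6 h.
Proof.
  intros E5 Hfb Hlim h hh. apply Rminus_diag_uniq.
  apply (eq_0_of_derive_0_of_lim_0 (fun k => C6 k - c6 k)); [| | exact hh].
  - intros k hk.
    assert (D := is_derive_minus _ _ _ _ _
                   (is_derive_C6_of_free_boundary C5 C6 k hk E5 (Hfb k ltac:(lra))) (is_derive_c6 k)).
    replace 0 with (minus (dc6 k) (dc6 k)) by (unfold minus, plus, opp; simpl; ring). exact D.
  - replace (Finite 0) with (Finite (0 - 0)) by (f_equal; ring).
    apply is_lim_minus'; [exact Hlim | exact is_lim_c6].
Qed.

Lemma condition_a_explicit (C2 C3 C4 C5 C6 : R -> R) h : 0 <= h ->
  is_lim (fun y => V (fun _ => 0) C2 C3 C4 C5 C6 y h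
                   - y * Derive (fun z => V (fun _ => 0) C2 C3 C4 C5 C6 z h) y)
    p_infty (- / (r * beta) * yhi h).
Proof.
  intros hh. root_facts. apply condition_a_iff; [exact hh |].
  apply (is_lim_ext (fun y => C2 h * (1 - rho2) * Rpower y rho2)); [intros y; ring |].
  apply is_lim_scal_0, is_lim_Rpower_neg. assumption.
Qed.

Lemma C1_eq_0_of_condition_a (C1 C2 C3 C4 C5 C6 : R -> R) h : 0 <= h ->
  is_lim (fun y => V C1 C2 C3 C4 C5 C6 y h - y * Derive (fun z => V C1 C2 C3 C4 C5 C6 z h) y)
    p_infty (- / (r * beta) * yhi h) ->
  C1 h = 0.
Proof.
  intros hh Ha. root_facts. apply condition_a_iff in Ha; [| exact hh].
  apply power_combination_lim_0 in Ha; [| lra | lra].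
  apply Rmult_integral in Ha. destruct Ha; lra.
Qed.

Lemma smooth_fit_explicit h : 0 <= h ->
  C1_at (fun y => V (fun _ => 0) c2 c3 c4 c5 c6 y h) (yhi h) /\
  C1_at (fun y => V (fun _ => 0) c2 c3 c4 c5 c6 y h) (ylo h).
Proof.
  intros hh.
  assert (Fhi := proj2 (smooth_fit_hi_iff (fun _ => 0) c2 c3 c4 h) ltac:(split; ring)).
  assert (Flo := proj2 (smooth_fit_lo_iff c3 c4 c5 c6 h) ltac:(split; reflexivity)).
  destruct (Rle_lt_or_eq_dec _ _ hh) as [hpos | <-].
  - rewrite C1_at_yhi_iff, C1_at_ylo_iff by exact hpos. split; assumption.
  - assert (e1 : yhi 0 = 1) by (rewrite Rmult_0_r; apply exp_0).
    assert (e0 : ylo 0 = 1) by (rewrite Rmult_0_r; apply exp_0).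
    rewrite e1 in Fhi |- *. rewrite e0 in Flo |- *.
    assert (G : C1_at (fun y => V (fun _ => 0) c2 c3 c4 c5 c6 y 0) 1)
      by (apply C1_at_1_of_fit; [transitivity (V2 c3 c4 1 0) | transitivity (dv2 c3 c4 1 0)]; tauto).
    split; exact G.
Qed.

Lemma admissible_explicit : admissible r mu sigma beta lam (fun _ => 0) c2 c3 c4 c5 c6.
Proof.
  split; [| split; [| split; [| split]]].
  - repeat split; apply differentiable_nonneg_of_ex_derive; intros h.
    + exists 0. apply (is_derive_const (K := R_AbsRing) (V := R_NormedModule)).
    + apply ex_derive_c2.
    + apply ex_derive_c3.
    + apply ex_derive_c4.
    + apply ex_derive_c5.
    + apply ex_derive_c6.
  - exact (condition_a_explicit c2 c3 c4 c5 c6).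
  - exact smooth_fit_explicit.
  - intros h _. exact (free_boundary_explicit h).
  - exact is_lim_c6.
Qed.

Lemma coefficients_eq_pos (C1 C2 C3 C4 C5 C6 : R -> R) :
  admissible r mu sigma beta lam C1 C2 C3 C4 C5 C6 ->
  forall h, 0 < h -> C2 h = c2 h /\ C3 h = c3 h /\ C4 h = c4 h /\ C5 h = c5 h /\ C6 h = c6 h.
Proof.
  unfold admissible. cbv zeta. intros [_ [Ha [Hb [Hc Hd]]]].
  assert (E1 : forall h, 0 < h -> C1 h = 0)
    by (intros h hh; apply (C1_eq_0_of_condition_a C1 C2 C3 C4 C5 C6); [| apply Ha]; lra).
  assert (Fit : forall h, 0 < h ->
    (C3 h - C1 h = c3 h /\ C4 h - C2 h = c4 h - c2 h) /\
    (C3 h - C5 h = c3 h - c5 h /\ C4 h - C6 h = c4 h - c6 h)).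
  { intros h hh. destruct (Hb h ltac:(lra)) as [Bhi Blo].
    rewrite C1_at_yhi_iff, smooth_fit_hi_iff in Bhi by exact hh.
    rewrite C1_at_ylo_iff, smooth_fit_lo_iff in Blo by exact hh.
    split; assumption. }
  assert (E5 : forall h, 0 < h -> C5 h = c5 h).
  { intros h hh. destruct (Fit h hh) as [[F1 _] [F3 _]]. rewrite (E1 h hh) in F1. lra. }
  intros h hh. assert (E6 := C6_eq_c6 C5 C6 E5 Hc Hd h hh).
  destruct (Fit h hh) as [[F1 F2] [F3 F4]]. rewrite (E1 h hh) in F1. repeat split; lra.
Qed.

Lemma admissible_unique (C1 C2 C3 C4 C5 C6 : R -> R) :
  admissible r mu sigma beta lam C1 C2 C3 C4 C5 C6 ->
  forall h, 0 <= h ->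
    C1 h = 0 /\ C2 h = c2 h /\ C3 h = c3 h /\ C4 h = c4 h /\ C5 h = c5 h /\ C6 h = c6 h.
Proof.
  intros Hadm. assert (Epos := coefficients_eq_pos _ _ _ _ _ _ Hadm).
  unfold admissible in Hadm. cbv zeta in Hadm.
  destruct Hadm as [(_ & D2 & D3 & D4 & D5 & D6) [Ha _]].
  intros h hh.
  assert (Extend : forall C c : R -> R, differentiable_nonneg C -> (forall k, ex_derive c k) ->
                     (forall k, 0 < k -> C k = c k) -> C h = c h).
  { intros C c DC Ec E.
    exact (eq_on_nonneg_of_eq_on_pos C c DC E (continuous_of_ex_derive c 0 (Ec 0)) h hh). }
  split; [exact (C1_eq_0_of_condition_a _ _ _ _ _ _ h hh (Ha h hh)) |].
  repeat split; apply Extend;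
    solve [ assumption | intros k hk; apply (Epos k hk)
          | exact ex_derive_c2 | exact ex_derive_c3 | exact ex_derive_c4
          | exact ex_derive_c5 | exact ex_derive_c6 ].
Qed.

End FreeBoundaryProblem.

Theorem proposition3p1 (r mu sigma beta lam : R)
  (hr : 0 < r) (hmu : r < mu) (hsigma : 0 < sigma) (hbeta : 0 < beta)
  (hlam0 : 0 < lam) (hlam1 : lam < 1) :
  admissible r mu sigma beta lam (fun _ => 0)
    (C2def r mu sigma beta lam) (C3def r mu sigma beta lam)
    (C4def r mu sigma beta lam) (C5def r mu sigma beta lam)
    (C6def r mu sigma beta lam) /\
  (forall C1 C2 C3 C4 C5 C6 : R -> R,
     admissible r mu sigma beta lam C1 C2 C3 C4 C5 C6 ->
     forall h, 0 <= h ->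
       C1 h = 0 /\ C2 h = C2def r mu sigma beta lam h /\
       C3 h = C3def r mu sigma beta lam h /\ C4 h = C4def r mu sigma beta lam h /\
       C5 h = C5def r mu sigma beta lam h /\ C6 h = C6def r mu sigma beta lam h).
Proof.
  split; [apply admissible_explicit | apply admissible_unique]; assumption.
Qed.
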